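(* Let $p$ be prime, $f:\mathrm{GF}(p)^n\to\mathrm{GF}(p)$ a polynomial function and $t=\prod_{j=1}^k x_{i_j}^{m_j}$ with distinct indices and $1\le m_j\le p-1$. Write $f=t\,f_{S(t)}+r$ with no monomial of $r$ divisible by $t$, and write $f_{S(t)}=t_1g_1+\cdots+t_ug_u$ where $g_1,\ldots,g_u$ are polynomials not depending on any of $x_{i_1},\ldots,x_{i_k}$ and $t_1,\ldots,t_u$ are all the distinct terms (monomials) in the variables $x_{i_1},\ldots,x_{i_k}$ appearing in $f_{S(t)}$. Let $\mathbf{u}$ be the $n$-tuple with $0$ in positions $i_1,\ldots,i_k$ and indeterminates elsewhere. Then \[ f_t(\mathbf{u}) = c_1g_1+\cdots+c_ug_u, \] where, if $t_s=x_{i_1}^{\ell_1}\cdots x_{i_k}^{\ell_k}$, the constant is $c_s=\prod_{j=1}^k D(m_j+\ell_j,m_j+\ell_j,m_j)\in\mathrm{GF}(p)$. In particular, if $f_{S(t)}$ does not depend on any of $x_{i_1},\ldots,x_{i_k}$, then $f_t=m_1!\cdots m_k!\,f_{S(t)}$.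
   Context: Polynomial functions over $\mathrm{GF}(p)$ are represented by their unique polynomial of degree at most $p-1$ in each variable. $f_t=\Delta^{(m_1)}_{\mathbf{e}_{i_1},\ldots,\mathbf{e}_{i_1}}\cdots\Delta^{(m_k)}_{\mathbf{e}_{i_k},\ldots,\mathbf{e}_{i_k}} f$ (difference $m_j$ times w.r.t. $x_{i_j}$ with step $1$), where $(\Delta_{\mathbf{a}} f)(\mathbf{x}) = f(\mathbf{x}+\mathbf{a})-f(\mathbf{x})$. For $1\le m\le j\le d$, $D(d,j,m)=\sum\binom{d}{i_1,\ldots,i_m,d-j}$ over $(i_1,\ldots,i_m)\in\{1,\ldots,j-m+1\}^m$ with $i_1+\cdots+i_m=j$ (multinomials read mod $p$). *)

From HB Require Import structures.
From mathcomp Require Import all_boot all_order all_algebra.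
Set Implicit Arguments. Unset Strict Implicit. Unset Printing Implicit Defensive.
Import GRing.Theory.
Local Open Scope ring_scope.

Definition expo (n p : nat) := {ffun 'I_n -> 'I_p}.

(* A polynomial (reduced: degree <= p-1 in each variable) over GF(p),
   given by its coefficient function on exponent vectors. *)
Definition mpoly (n p : nat) := {ffun expo n p -> 'F_p}.

Definition point (n p : nat) := {ffun 'I_n -> 'F_p}.

Definition meval n p (a : mpoly n p) (x : point n p) : 'F_p :=
  \sum_(e : expo n p) a e * \prod_(i < n) x i ^+ (e i).

Definition shift n p (i : 'I_n) (x : point n p) : point n p :=
  [ffun j => x j + (j == i)%:R].

Definition delta n p (i : 'I_n) (g : point n p -> 'F_p) : point n p -> 'F_p :=
  fun x => g (shift i x) - g x.

(* f_t for t = prod_i x_i^{m i}: differentiate m i times w.r.t. x_i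
   (for each i; m i = 0 means no differencing in x_i). *)
Definition fdiff n p (m : expo n p) (g : point n p -> 'F_p) : point n p -> 'F_p :=
  foldr (fun i h => iter (m i) (delta i) h) g (enum 'I_n).

Definition insupp n p (m : expo n p) (i : 'I_n) : bool := (0 < m i)%N.

(* f_{S(t)}: the unique polynomial with f = t * f_{S(t)} + r, where no
   monomial of r is divisible by t; its coefficient at e is the
   coefficient of f at t * x^e (i.e. at exponent m + e). *)
Definition fS n p (a : mpoly n p) (m : expo n p) : mpoly n p :=
  [ffun e : expo n p => \sum_(e0 : expo n p | [forall i, (e0 i : nat) == (m i + e i)%N]) a e0].

Definition supported n p (m : expo n p) (l : expo n p) : bool :=
  [forall i, ~~ insupp m i ==> ((l i : nat) == 0%N)].

(* g_l: the coefficient polynomial of the term x^l (l supported on S(t))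
   in f_{S(t)}, a polynomial not depending on the variables of S(t). *)
Definition gpart n p (b : mpoly n p) (m : expo n p) (l : expo n p) : mpoly n p :=
  [ffun e : expo n p => if [forall i, insupp m i ==> ((e i : nat) == 0%N)] then
     \sum_(e0 : expo n p | [forall i, (e0 i : nat) == (l i + e i)%N]) b e0
   else 0].

Definition multinom (d j k : nat) (t : 'I_k -> nat) : nat :=
  (d`! %/ ((\prod_(r < k) (t r)`!) * (d - j)`!))%N.

(* D(d,j,m) = sum of binom{d}{i_1,...,i_m,d-j} over
   (i_1,...,i_m) in {1,...,j-m+1}^m with i_1+...+i_m = j. *)
Definition Dnum (d j m : nat) : nat :=
  (\sum_(t : {ffun 'I_m -> 'I_(j - m + 2)} |
       [forall r, (0 < (t r : nat))%N] && ((\sum_(r < m) (t r : nat)) == j)%N)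
     multinom d j (fun r => (t r : nat)))%N.

Definition cconst n p (m l : expo n p) : 'F_p :=
  \prod_(i < n | insupp m i) (Dnum (m i + l i) (m i + l i) (m i))%:R.

From HB Require Import structures.
From mathcomp Require Import all_boot all_order all_algebra.
From mathcomp Require Import zify ring.
From Stdlib Require Import FunctionalExtensionality.
Set Implicit Arguments. Unset Strict Implicit. Unset Printing Implicit Defensive.
Import GRing.Theory.

(* The difference operators in distinct variables act independently on a
   product of univariate functions, so on the monomial x^e the operator f_t
   yields prod_i Delta^(m_i) (y^(e_i)) evaluated at x_i.  Expanding
   (y + 1)^d binomially k times shows that Delta^k y^d is the sum, over
   k-tuples t of positive integers with |t| <= d, of the multinomial
   coefficients binom{d}{t, d - |t|} times y^(d - |t|).  Hence Delta^k y^d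
   vanishes for d < k, equals k! for d = k, and at y = 0 only the tuples with
   |t| = d survive, which gives D(d, d, k).  Regrouping the monomials of f
   according to their part in the variables of t yields both claims. *)

Lemma dvdn_prod_fact k (t : 'I_k -> nat) d :
  (\sum_(r < k) t r <= d)%N ->
  (\prod_(r < k) (t r)`! * (d - \sum_(r < k) t r)`!) %| d`!.
Proof.
elim: k t d => [|k IH] t d.
  by rewrite big_ord0 big_ord0 mul1n subn0 dvdnn.
rewrite big_ord_recl big_ord_recl => le_td.
set s := \sum_(i < k) t (lift ord0 i).
have le_t0d : (t ord0 <= d)%N by lia.
have /IH dvd_rest : (s <= d - t ord0)%N by lia.
rewrite -/s -(bin_fact le_t0d) subnDA [X in _ %| X]mulnCA.
rewrite [X in X %| _](_ : _ = (t ord0)`! *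
  (\prod_(r < k) (t (lift ord0 r))`! * (d - t ord0 - s)`!))%N; last by ring.
by rewrite dvdn_mul // dvdn_mull.
Qed.

Lemma multinom_recl d k (t : 'I_k.+1 -> nat) :
  (\sum_(r < k.+1) t r <= d)%N ->
  multinom d (\sum_(r < k.+1) t r) t =
  (multinom d (\sum_(r < k) t (lift ord0 r)) (fun r => t (lift ord0 r)) *
   'C(d - \sum_(r < k) t (lift ord0 r), t ord0))%N.
Proof.
rewrite /multinom big_ord_recl big_ord_recl.
set s := \sum_(i < k) t (lift ord0 i).
set A := \prod_(i < k) (t (lift ord0 i))`!.
set i := t ord0 => le_isd.
have le_sd : (s <= d)%N by lia.
have le_i : (i <= d - s)%N by lia.
have /dvdnP [q def_d] := @dvdn_prod_fact _ (fun r => t (lift ord0 r)) _ le_sd.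
rewrite -/s -/A in def_d.
have A_gt0 : (0 < A)%N by rewrite prodn_gt0 // => r; exact: fact_gt0.
rewrite def_d mulnK; last by rewrite muln_gt0 A_gt0 fact_gt0.
rewrite -(bin_fact le_i) (_ : d - (i + s) = d - s - i)%N; last by lia.
rewrite (_ : q * (A * ('C(d - s, i) * (i`! * (d - s - i)`!))) =
   (q * 'C(d - s, i)) * (i`! * A * (d - s - i)`!))%N; last by ring.
by rewrite mulnK // !muln_gt0 A_gt0 !fact_gt0.
Qed.

Lemma eq_multinom d j k (t1 t2 : 'I_k -> nat) :
  t1 =1 t2 -> multinom d j t1 = multinom d j t2.
Proof. by move=> eq_t; rewrite /multinom (eq_bigr _ (fun r _ => congr1 _ (eq_t r))). Qed.

Local Open Scope ring_scope.

Definition ffun_cons (T : Type) k (i : T) (t : {ffun 'I_k -> T}) : {ffun 'I_k.+1 -> T} :=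
  [ffun r => if unlift ord0 r is Some j then t j else i].

Lemma ffun_cons0 T k (i : T) (t : {ffun 'I_k -> T}) : ffun_cons i t ord0 = i.
Proof. by rewrite ffunE unlift_none. Qed.

Lemma ffun_consS T k (i : T) (t : {ffun 'I_k -> T}) j : ffun_cons i t (lift ord0 j) = t j.
Proof. by rewrite ffunE liftK. Qed.

Lemma big_ffun_cons (V : nmodType) (T : finType) k (P : pred {ffun 'I_k.+1 -> T})
   (F : {ffun 'I_k.+1 -> T} -> V) :
  \sum_(t | P t) F t =
  \sum_(i : T) \sum_(t : {ffun 'I_k -> T} | P (ffun_cons i t)) F (ffun_cons i t).
Proof.
rewrite (reindex (fun q : T * {ffun 'I_k -> T} => ffun_cons q.1 q.2)) /=.
  by rewrite pair_big_dep.
exists (fun t : {ffun 'I_k.+1 -> T} => (t ord0, [ffun j => t (lift ord0 j)])).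
  move=> [i t] _ /=; rewrite ffun_cons0; congr (_, _); apply/ffunP => j.
  by rewrite ffunE ffun_consS.
move=> t _ /=; apply/ffunP => r; rewrite ffunE.
by case: unliftP => [j ->|->]; rewrite ?ffunE.
Qed.

Lemma sum_ffun_cons k d (i : 'I_d) (t : {ffun 'I_k -> 'I_d}) :
  (\sum_(r < k.+1) (ffun_cons i t r : nat) = i + \sum_(r < k) (t r : nat))%N.
Proof.
rewrite big_ord_recl ffun_cons0; congr (_ + _)%N.
by apply: eq_bigr => r _; rewrite ffun_consS.
Qed.

Lemma ffun_cons_gt0 k d (i : 'I_d) (t : {ffun 'I_k -> 'I_d}) :
  [forall r, (0 < ffun_cons i t r)%N] = (0 < i)%N && [forall r, (0 < t r)%N].
Proof.
apply/forallP/andP => [pos_it|[pos_i /forallP pos_t] r].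
  by rewrite -(ffun_cons0 i t); split=> //; apply/forallP => r; rewrite -(ffun_consS i).
by case: (unliftP ord0 r) => [j ->|->]; rewrite ?ffun_consS ?ffun_cons0.
Qed.

Lemma multinom_ffun_cons k d (i : 'I_d.+1) (t : {ffun 'I_k -> 'I_d.+1}) :
  (i + \sum_(r < k) (t r : nat) <= d)%N ->
  multinom d (i + \sum_(r < k) (t r : nat)) (fun r => (ffun_cons i t r : nat)) =
  (multinom d (\sum_(r < k) (t r : nat)) (fun r => (t r : nat)) *
   'C(d - \sum_(r < k) (t r : nat), i))%N.
Proof.
move=> le_d; have := @multinom_recl d k (fun r => (ffun_cons i t r : nat)).
rewrite sum_ffun_cons ffun_cons0 => /(_ le_d) ->.
rewrite (eq_bigr (fun r => (t r : nat))) => [|r _]; last by rewrite ffun_consS.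
by congr (_ * _)%N; apply: eq_multinom => r; rewrite ffun_consS.
Qed.

Lemma sum_pos_ge k (t : 'I_k -> nat) r0 :
  (forall r, 0 < t r)%N -> (t r0 + k.-1 <= \sum_(r < k) t r)%N.
Proof.
move=> pos_t; rewrite (bigD1 r0) //= leq_add2l.
have <- : (\sum_(r < k | r != r0) 1 = k.-1)%N by rewrite sum1_card cardC1 card_ord.
by apply: leq_sum => r _; exact: pos_t.
Qed.

Lemma sum_pos_ge_card k (t : 'I_k -> nat) :
  (forall r, 0 < t r)%N -> (k <= \sum_(r < k) t r)%N.
Proof.
case: k t => [|k] t pos_t //.
by apply: leq_trans (sum_pos_ge ord0 pos_t); rewrite /= -add1n leq_add2r pos_t.
Qed.

Definition fdelta1 (R : pzRingType) (g : R -> R) : R -> R := fun y => g (y + 1) - g y.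

Definition delta_pow (R : comPzRingType) (d k : nat) (y : R) : R :=
  \sum_(t : {ffun 'I_k -> 'I_d.+1} |
          [forall r, (0 < t r)%N] && (\sum_(r < k) (t r : nat) <= d)%N)
    (multinom d (\sum_(r < k) (t r : nat)) (fun r => (t r : nat)))%:R *
    y ^+ (d - \sum_(r < k) (t r : nat)).

Section DeltaPow.
Variable R : comPzRingType.
Implicit Types (y : R) (d k : nat).

Lemma delta_pow0 d y : delta_pow d 0 y = y ^+ d.
Proof.
rewrite /delta_pow (big_pred1 [ffun r : 'I_0 => ord0]); last first.
  move=> t; rewrite big_ord0 /=.
  have -> : [forall r : 'I_0, (0 < t r)%N] by apply/forallP => -[].
  by apply/esym/eqP/ffunP => -[].
by rewrite big_ord0 subn0 /multinom big_ord0 subn0 mul1n divnn fact_gt0 mul1r.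
Qed.

Lemma subr_exprD1 y a :
  (y + 1) ^+ a - y ^+ a = \sum_(i < a.+1 | (0 < i)%N) y ^+ (a - i) *+ 'C(a, i).
Proof.
rewrite exprDn big_ord_recl subn0 expr0 mulr1 bin0 mulr1n addrAC subrr add0r.
rewrite [RHS]big_mkcond big_ord_recl /= add0r; apply: eq_bigr => i _.
by rewrite expr1n mulr1.
Qed.

Lemma delta_powS d k y : delta_pow d k.+1 y = delta_pow d k (y + 1) - delta_pow d k y.
Proof.
rewrite /delta_pow big_ffun_cons -sumrB.
under eq_bigr => i _ do rewrite big_mkcond.
rewrite exchange_big /= [RHS]big_mkcond; apply: eq_bigr => t _.
set s := (\sum_(r < k) (t r : nat))%N.
case: (boolP ([forall r, (0 < t r)%N] && (s <= d)%N)) => [/andP [pos_t le_sd]|bad_t]; last first.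
  apply: big1 => i _; rewrite ffun_cons_gt0 sum_ffun_cons -/s.
  case: ifP => // /andP [/andP [_ pos_t] le_isd].
  by rewrite pos_t (leq_trans (leq_addl _ _) le_isd) in bad_t.
set a := (d - s)%N; set M := multinom d s _.
rewrite -mulrBr subr_exprD1 mulr_sumr.
rewrite (big_ord_widen_cond d.+1 (fun i => 0 < i)%N
  (fun i => M%:R * (y ^+ (a - i) *+ 'C(a, i)))) ?ltnS ?leq_subr //.
rewrite big_mkcond [RHS]big_mkcond; apply: eq_bigr => i _.
rewrite ffun_cons_gt0 pos_t sum_ffun_cons -/s andbT.
have -> : (i < a.+1)%N = (i + s <= d)%N by rewrite /a; lia.
case: ifP => // /andP [_ le_isd].
rewrite multinom_ffun_cons // -/s -/M natrM -mulr_natr.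
by rewrite (_ : d - (i + s) = a - i)%N; [ring | rewrite /a; lia].
Qed.

Lemma iter_fdelta1_pow d k y : iter k (@fdelta1 R) (fun z => z ^+ d) y = delta_pow d k y.
Proof.
elim: k y => [|k IH] y; first by rewrite delta_pow0.
by rewrite iterS /fdelta1 !IH delta_powS.
Qed.

Lemma delta_pow_small d k y : (d < k)%N -> delta_pow d k y = 0.
Proof.
move=> lt_dk; rewrite /delta_pow big_pred0 // => t.
apply/negbTE/negP => /andP [/forallP pos_t le_sd].
have := leq_trans (sum_pos_ge_card (t := fun r => (t r : nat)) pos_t) le_sd.
by rewrite leqNgt lt_dk.
Qed.

Lemma delta_pow_diag k y : delta_pow k.+1 k.+1 y = (k.+1)`!%:R.
Proof.
pose one : {ffun 'I_k.+1 -> 'I_k.+2} := [ffun=> inord 1].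
have one1 r : (one r : nat) = 1%N by rewrite ffunE inordK.
have sum_one : (\sum_(r < k.+1) (one r : nat) = k.+1)%N.
  by rewrite (eq_bigr (fun _ => 1%N)) ?sum1_card ?card_ord // => r _; rewrite one1.
rewrite /delta_pow (big_pred1 one); last first.
  move=> t /=; apply/idP/eqP => [/andP [/forallP pos_t le_sd]|->]; last first.
    by rewrite sum_one leqnn andbT; apply/forallP => r; rewrite one1.
  apply/ffunP => r; apply: val_inj => /=; rewrite one1.
  have /= := leq_trans (sum_pos_ge (t := fun r => (t r : nat)) r pos_t) le_sd.
  by have := pos_t r; lia.
rewrite sum_one subnn expr0 mulr1 /multinom subnn fact0 muln1.
by rewrite (eq_bigr (fun _ => 1%N)) ?prod_nat_const ?exp1n ?divn1 // => r _; rewrite one1.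
Qed.

Lemma delta_pow_at0 d k :
  delta_pow d k (0 : R) =
  (\sum_(t : {ffun 'I_k -> 'I_d.+1} |
          [forall r, (0 < t r)%N] && (\sum_(r < k) (t r : nat) == d)%N)
     multinom d d (fun r => (t r : nat)))%:R.
Proof.
rewrite /delta_pow natr_sum big_mkcond [RHS]big_mkcond.
apply: eq_bigr => t _; rewrite expr0n; case: [forall r, _] => //=.
case: (ltngtP (\sum_(r < k) (t r : nat)) d) => [lt_sd|//|->].
  by rewrite subn_eq0 leqNgt lt_sd mulr0.
by rewrite subnn eqxx mulr1.
Qed.

End DeltaPow.

(* In D(d, d, k) each part is at most d - k + 1; widening the range of the
   parts to d does not change the sum. *)
Lemma Dnum_widen d k : (0 < k <= d)%N ->
  Dnum d d k =
  (\sum_(t : {ffun 'I_k -> 'I_d.+1} |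
          [forall r, (0 < t r)%N] && (\sum_(r < k) (t r : nat) == d)%N)
     multinom d d (fun r => (t r : nat)))%N.
Proof.
move=> /andP [k_gt0 le_kd].
have le_wd : (d - k + 2 <= d.+1)%N by lia.
have w_gt0 : (0 < d - k + 2)%N by lia.
pose widen (t : {ffun 'I_k -> 'I_(d - k + 2)}) : {ffun 'I_k -> 'I_d.+1} :=
  [ffun r => widen_ord le_wd (t r)].
pose narrow (t : {ffun 'I_k -> 'I_d.+1}) : {ffun 'I_k -> 'I_(d - k + 2)} :=
  [ffun r => Ordinal (ltn_pmod (t r) w_gt0)].
rewrite /Dnum (reindex widen).
  apply: eq_big => [t|t _].
    congr (_ && _); first by apply: eq_forallb => r; rewrite ffunE.
    by congr (_ == _); apply: eq_bigr => r _; rewrite ffunE.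
  by apply: eq_multinom => r; rewrite ffunE.
exists narrow => t.
  by move=> _; apply/ffunP => r; apply: val_inj; rewrite !ffunE /= modn_small.
rewrite inE => /andP [/forallP pos_t /eqP sum_t].
apply/ffunP => r; apply: val_inj; rewrite !ffunE /= modn_small //.
have := sum_pos_ge (t := fun r => (t r : nat)) r pos_t; rewrite /= sum_t; lia.
Qed.

Section Differences.
Variables n p : nat.
Local Notation F := 'F_p.

Definition prod_fun (phi : 'I_n -> F -> F) : point n p -> F :=
  fun x => \prod_(i < n) phi i (x i).

Definition upd_fun (phi : 'I_n -> F -> F) i (g : F -> F) : 'I_n -> F -> F :=
  fun j => if j == i then g else phi j.

Lemma delta_prod_fun i phi :
  delta i (prod_fun phi) = prod_fun (upd_fun phi i (@fdelta1 F (phi i))).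
Proof.
apply: functional_extensionality => x.
rewrite /delta /prod_fun (bigD1 i) //= [X in _ - X](bigD1 i) //= [RHS](bigD1 i) //=.
rewrite /upd_fun eqxx /fdelta1 ffunE eqxx.
rewrite (eq_bigr (fun j => phi j (x j))) => [|j /negbTE neq_ji]; last first.
  by rewrite ffunE neq_ji addr0.
rewrite [in RHS](eq_bigr (fun j => phi j (x j))) => [|j /negbTE neq_ji]; last first.
  by rewrite neq_ji.
by rewrite mulrBl.
Qed.

Lemma iter_delta_prod_fun k i phi :
  iter k (delta i) (prod_fun phi) =
  prod_fun (upd_fun phi i (iter k (@fdelta1 F) (phi i))).
Proof.
elim: k => [|k IH] /=.
  by congr prod_fun; apply: functional_extensionality => j; rewrite /upd_fun; case: eqP => // ->.
rewrite IH delta_prod_fun; congr prod_fun; apply: functional_extensionality => j.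
by rewrite /upd_fun eqxx; case: eqP.
Qed.

Lemma foldr_delta_prod_fun (m : expo n p) (s : seq 'I_n) phi :
  foldr (fun i h => iter (m i) (delta i) h) (prod_fun phi) s =
  prod_fun (fun j => iter (m j * count_mem j s) (@fdelta1 F) (phi j)).
Proof.
elim: s => [|i s IH] /=.
  by congr prod_fun; apply: functional_extensionality => j; rewrite muln0.
rewrite IH iter_delta_prod_fun; congr prod_fun; apply: functional_extensionality => j.
rewrite /upd_fun; case: eqP => [->|/eqP neq_ji]; first by rewrite eqxx mulnDr muln1 iterD.
by rewrite eq_sym (negbTE neq_ji) add0n.
Qed.

Lemma fdiff_prod_fun (m : expo n p) phi :
  fdiff m (prod_fun phi) = prod_fun (fun j => iter (m j) (@fdelta1 F) (phi j)).
Proof.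
rewrite /fdiff foldr_delta_prod_fun; congr prod_fun; apply: functional_extensionality => j.
by rewrite count_uniq_mem ?enum_uniq // mem_enum muln1.
Qed.

Lemma fdiff_lincomb (I : finType) (m : expo n p) (c : I -> F) (G : I -> point n p -> F) :
  fdiff m (fun x => \sum_(e : I) c e * G e x) = fun x => \sum_(e : I) c e * fdiff m (G e) x.
Proof.
rewrite /fdiff; elim: (enum 'I_n) => [|i s IH] //=.
rewrite IH; elim: (nat_of_ord (m i)) => [|k IHk] //=.
rewrite IHk; apply: functional_extensionality => x.
by rewrite /delta -sumrB; apply: eq_bigr => e _; rewrite mulrBr.
Qed.

Lemma fdiff_meval (m : expo n p) (f : mpoly n p) (x : point n p) :
  fdiff m (meval f) x = \sum_(e : expo n p) f e * \prod_(i < n) delta_pow (e i) (m i) (x i).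
Proof.
have -> : meval f = fun x => \sum_(e : expo n p) f e * prod_fun (fun i z => z ^+ e i) x by [].
rewrite fdiff_lincomb; apply: eq_bigr => e _; rewrite fdiff_prod_fun /prod_fun.
by congr (_ * _); apply: eq_bigr => i _; rewrite iter_fdelta1_pow.
Qed.

Definition expo_le (m e : expo n p) : bool := [forall i, (m i <= e i)%N].

Lemma fdiff_meval_expo_le (m : expo n p) (f : mpoly n p) (x : point n p) :
  fdiff m (meval f) x =
  \sum_(e : expo n p | expo_le m e) f e * \prod_(i < n) delta_pow (e i) (m i) (x i).
Proof.
rewrite fdiff_meval (bigID (expo_le m)) /= [X in _ + X]big1 ?addr0 //.
move=> e /forallPn [i lt_ei]; rewrite (bigD1 i) //= delta_pow_small ?mul0r ?mulr0 //.
by rewrite ltnNge.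
Qed.

End Differences.

Section Regroup.
Variables n p : nat.
Local Notation F := 'F_p.
Implicit Types (f b : mpoly n p) (m e l : expo n p) (x : point n p).

Definition ord_subn (a : 'I_p) (b : nat) : 'I_p :=
  Ordinal (leq_ltn_trans (leq_subr b a) (ltn_ord a)).

Definition expo_sub e m : expo n p := [ffun i => ord_subn (e i) (m i)].

(* Coordinates outside [P] are set to [e i - e i], a zero of ['I_p] that needs
   no proof of [0 < p]. *)
Definition expo_mask (P : pred 'I_n) e : expo n p :=
  [ffun i => if P i then e i else ord_subn (e i) (e i)].

Definition monom x e : F := \prod_(i < n) x i ^+ e i.

Lemma expo_addE m e e' : expo_le m e ->
  [forall i, (e i : nat) == (m i + e' i)%N] = (e' == expo_sub e m).
Proof.
move=> /forallP le_me; apply/forallP/eqP => [def_e|->] .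
  apply/ffunP => i; apply: val_inj; rewrite ffunE /=.
  by have := le_me i; have := eqP (def_e i); lia.
by move=> i; rewrite ffunE /=; apply/eqP; have := le_me i; lia.
Qed.

Lemma expo_addF m e e' : ~~ expo_le m e ->
  [forall i, (e i : nat) == (m i + e' i)%N] = false.
Proof.
move=> /forallPn [i lt_ei]; apply/negbTE/forallPn; exists i.
by apply: contra lt_ei => /eqP ->; rewrite leq_addr.
Qed.

Lemma sum_fS f m (H : expo n p -> F) :
  \sum_e fS f m e * H e = \sum_(e | expo_le m e) f e * H (expo_sub e m).
Proof.
under eq_bigr => e' _ do rewrite ffunE mulr_suml big_mkcond.
rewrite exchange_big /= [RHS]big_mkcond; apply: eq_bigr => e _.
case: (boolP (expo_le m e)) => le_me; last by apply: big1 => e' _; rewrite expo_addF.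
rewrite -big_mkcond (eq_bigl (pred1 (expo_sub e m))) => [|e']; last exact: expo_addE.
by rewrite big_pred1_eq.
Qed.

Lemma fS_expo_sub f m e : expo_le m e -> fS f m (expo_sub e m) = f e.
Proof.
move=> /forallP le_me; rewrite ffunE (big_pred1 e) // => e0 /=.
apply/forallP/eqP => [def_e0|-> i]; last by rewrite ffunE /=; have := le_me i; lia.
apply/ffunP => i; apply: val_inj; have := eqP (def_e0 i); rewrite ffunE /=.
by have := le_me i; lia.
Qed.

Lemma gpart_indexE m l e' e :
  [&& supported m l, [forall i, insupp m i ==> ((e' i : nat) == 0%N)]
    & [forall i, (e i : nat) == (l i + e' i)%N]] =
  (l == expo_mask (insupp m) e) && (e' == expo_mask (predC (insupp m)) e).
Proof.
apply/idP/andP => [/and3P [/forallP supp_l /forallP supp_e' /forallP def_e]|[/eqP -> /eqP ->]].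
  split; apply/eqP/ffunP => i; apply: val_inj; rewrite ffunE /=;
  move: (supp_l i) (supp_e' i) (eqP (def_e i)); case: (insupp m i) => /= A B E;
  rewrite /= ?subnn; try move/eqP: A => A; try move/eqP: B => B; lia.
apply/and3P; split; apply/forallP => i; rewrite !ffunE /=;
  by case: (insupp m i); rewrite //= ?subnn ?addn0.
Qed.

Lemma sum_gpart b m x :
  \sum_(l : expo n p | supported m l) cconst m l * meval (gpart b m l) x =
  \sum_(e : expo n p) b e * (cconst m (expo_mask (insupp m) e) * monom x (expo_mask (predC (insupp m)) e)).
Proof.
rewrite big_mkcond /=.
transitivity (\sum_(l : expo n p) \sum_(e' : expo n p) \sum_(e : expo n p)
   (if [&& supported m l, [forall i, insupp m i ==> ((e' i : nat) == 0%N)]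
         & [forall i, (e i : nat) == (l i + e' i)%N]]
    then b e * (cconst m l * monom x e') else 0)).
  apply: eq_bigr => l _; case: (supported m l) => /=; last first.
    by rewrite big1 // => e' _; rewrite big1.
  rewrite /meval mulr_sumr; apply: eq_bigr => e' _; rewrite ffunE.
  case: [forall i, _] => /=; last by rewrite mul0r mulr0 big1.
  rewrite mulr_suml mulr_sumr big_mkcond; apply: eq_bigr => e _.
  by case: [forall i, _] => //; rewrite /monom; ring.
under eq_bigr => l _ do rewrite exchange_big.
rewrite exchange_big; apply: eq_bigr => e _.
under eq_bigr => l _ do under eq_bigr => e' _ do rewrite gpart_indexE.
rewrite (bigD1 (expo_mask (insupp m) e)) //= [X in _ + X]big1 => [|l /negbTE neq_l]; last first.
  by apply: big1 => e' _; rewrite neq_l.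
rewrite addr0 (bigD1 (expo_mask (predC (insupp m)) e)) //= !eqxx.
by rewrite [X in _ + X]big1 ?addr0 // => e' /negbTE ->; rewrite andbF.
Qed.

Lemma prod_delta_pow_on_zero m e x :
  expo_le m e -> (forall i, insupp m i -> x i = 0) ->
  \prod_(i < n) delta_pow (e i) (m i) (x i) =
  cconst m (expo_mask (insupp m) (expo_sub e m)) *
  monom x (expo_mask (predC (insupp m)) (expo_sub e m)).
Proof.
move=> /forallP le_me x0.
rewrite /cconst /monom [X in _ = X * _]big_mkcond -big_split; apply: eq_bigr => i _ /=.
rewrite !ffunE /=; have := le_me i; rewrite /insupp.
case: (posnP (m i)) => [-> _|m_gt0 le_mei] /=.
  by rewrite delta_pow0 mul1r subn0.
rewrite x0 /insupp // subnn expr0 mulr1 subnKC // delta_pow_at0 Dnum_widen //.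
by rewrite m_gt0.
Qed.

Lemma prod_delta_pow_diag m e x :
  expo_le m e -> (forall i, insupp m i -> (e i : nat) = m i) ->
  \prod_(i < n) delta_pow (e i) (m i) (x i) =
  (\prod_(i < n | insupp m i) (m i)`!)%:R * monom x (expo_sub e m).
Proof.
move=> /forallP le_me eq_me.
rewrite /monom natr_prod [X in _ = X * _]big_mkcond -big_split; apply: eq_bigr => i _ /=.
rewrite ffunE /=; move: (eq_me i); rewrite /insupp.
case: (posnP (m i)) => [-> _|m_gt0 /(_ isT) ->] /=.
  by rewrite delta_pow0 mul1r subn0.
by rewrite subnn expr0 mulr1; case: (nat_of_ord (m i)) m_gt0 => // k _; rewrite delta_pow_diag.
Qed.

End Regroup.

Lemma fdiff_meval_on_zero (n p : nat) (f : mpoly n p) (m : expo n p) (x : point n p) :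
  (forall i, insupp m i -> x i = 0) ->
  fdiff m (meval f) x =
  \sum_(l : expo n p | supported m l) cconst m l * meval (gpart (fS f m) m l) x.
Proof.
move=> x0; rewrite fdiff_meval_expo_le sum_gpart sum_fS.
by apply: eq_bigr => e le_me; rewrite prod_delta_pow_on_zero.
Qed.

Lemma fdiff_meval_fS_free (n p : nat) (f : mpoly n p) (m : expo n p) (x : point n p) :
  (forall e, fS f m e != 0 -> forall i, insupp m i -> (e i : nat) = 0%N) ->
  fdiff m (meval f) x = (\prod_(i < n | insupp m i) (m i)`!)%:R * meval (fS f m) x.
Proof.
move=> fS_free; rewrite fdiff_meval_expo_le /meval mulr_sumr.
under [RHS]eq_bigr => e _ do rewrite mulrCA.
rewrite sum_fS; apply: eq_bigr => e le_me.
have [->|fe_neq0] := eqVneq (f e) 0; first by rewrite !mul0r.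
congr (_ * _); apply: prod_delta_pow_diag => // i supp_i.
have := fS_free (expo_sub e m); rewrite fS_expo_sub // => /(_ fe_neq0 i supp_i).
rewrite ffunE /= => /eqP.
by rewrite subn_eq0 => le_em; apply/eqP; rewrite eqn_leq le_em (forallP le_me).
Qed.

Unset Implicit Arguments.

Theorem mainTheorem9 (p n : nat) (hp : prime p) (f : mpoly n p) (m : expo n p) :
  (forall x : point n p, (forall i, insupp m i -> x i = 0) ->
     fdiff m (meval f) x =
     \sum_(l : expo n p | supported m l && (gpart (fS f m) m l != 0))
        cconst m l * meval (gpart (fS f m) m l) x)
  /\
  ((forall e : expo n p, fS f m e != 0 -> forall i, insupp m i -> (e i : nat) = 0%N) ->
   forall x : point n p,
     fdiff m (meval f) x =
     (\prod_(i < n | insupp m i) (m i)`!)%:R * meval (fS f m) x).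
Proof.
split=> [x x0|fS_free x]; last exact: fdiff_meval_fS_free.
rewrite fdiff_meval_on_zero // big_mkcondr; apply: eq_bigr => l _.
case: eqP => [->|//].
by rewrite /meval big1 ?mulr0 // => e _; rewrite ffunE mul0r.
Qed.
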